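(* Let $k\ge1$, let $M=\Gamma(\mathbb Z\,\overrightarrow{\times}\,G,(k,0))$ with $G$ a Dedekind $\sigma$-complete $\ell$-group, and let $F:\mathbb R^2\to M$ be a two-dimensional spectral resolution. Then every non-empty $T_i$, $i\in\{1,\ldots,k\}$, has at most $k$ characteristic points, and $F$ has at most $k^2$ characteristic points.
   Context: $\mathbb Z\,\overrightarrow{\times}\,G$ is $\mathbb Z\times G$ with lexicographic order; $\Gamma(K,v)=([0,v];\oplus,',0,v)$ with $a\oplus b=(a+b)\wedge v$. A two-dimensional spectral resolution is $F:\mathbb R^2\to M$ such that: (i) $F$ is monotone; (ii) $\bigvee_{(s,t)}F(s,t)=1$; (iii) $F(s,t)=\bigvee_{(s',t')\ll(s,t)}F(s',t')$; (iv) $\bigwedge_sF(s,t)=0=\bigwedge_tF(s,t)$; (v) $0\le F(b_1,b_2)-F(a_1,b_2)-F(b_1,a_2)+F(a_1,a_2)\le1$ for $a_1\le b_1$, $a_2\le b_2$ (in the group). $M_j=\{(j,g)\in M\}$, $T_j=\{(s,t)\colon F(s,t)\in M_j\}$. For $i\ge1$ and $(s,t)\in T_i$, $\pi_i(s,t)=(\inf\{r\colon(r,t)\in T_i\},\inf\{r\colon(s,r)\in T_i\})$; characteristic points of $T_i$ are the $\pi_i(s,t)$, $(s,t)\in T_i$; characteristic points of $F$ are those of the $T_i$, $i\ge1$. *)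

From mathcomp Require Import all_boot all_algebra.
From Stdlib Require Import Reals ZArith.

Set Implicit Arguments.
Unset Strict Implicit.
Unset Printing Implicit Defensive.

Definition is_sup_in {T : Type} (le : T -> T -> Prop) (A : T -> Prop) (x : T) : Prop :=
  (forall y, A y -> le y x) /\ (forall z, (forall y, A y -> le y z) -> le x z).

Definition is_lgroup (G : zmodType) (le : G -> G -> Prop) : Prop :=
  [/\ (forall x, le x x),
      (forall x y, le x y -> le y x -> x = y),
      (forall x y z, le x y -> le y z -> le x z),
      (forall x y z, le x y -> le (GRing.add x z) (GRing.add y z)) &
      (forall x y : G, exists j, is_sup_in le (fun w => w = x \/ w = y) j)].

Definition dedekind_sigma_complete (G : zmodType) (le : G -> G -> Prop) : Prop :=
  forall f : nat -> G, (exists u, forall n, le (f n) u) ->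
    exists s, is_sup_in le (fun w => exists n, w = f n) s.

Definition lex_le (G : zmodType) (le : G -> G -> Prop) (x y : Z * G) : Prop :=
  (x.1 < y.1)%Z \/ (x.1 = y.1 /\ le x.2 y.2).

Definition lex_add (G : zmodType) (x y : Z * G) : Z * G :=
  ((x.1 + y.1)%Z, GRing.add x.2 y.2).

Definition lex_sub (G : zmodType) (x y : Z * G) : Z * G :=
  ((x.1 - y.1)%Z, GRing.add x.2 (GRing.opp y.2)).

Definition lex_zero (G : zmodType) : Z * G := (0%Z, GRing.zero).

Definition lex_unit (G : zmodType) (k : nat) : Z * G := (Z.of_nat k, GRing.zero).

Definition inM (G : zmodType) (le : G -> G -> Prop) (k : nat) (x : Z * G) : Prop :=
  lex_le le (lex_zero G) x /\ lex_le le x (lex_unit G k).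

Definition is_supM (G : zmodType) le (k : nat) (A : Z * G -> Prop) (x : Z * G) : Prop :=
  inM le k x /\ (forall y, A y -> lex_le le y x) /\
  (forall z, inM le k z -> (forall y, A y -> lex_le le y z) -> lex_le le x z).

Definition is_infM (G : zmodType) le (k : nat) (A : Z * G -> Prop) (x : Z * G) : Prop :=
  inM le k x /\ (forall y, A y -> lex_le le x y) /\
  (forall z, inM le k z -> (forall y, A y -> lex_le le z y) -> lex_le le z x).

Local Open Scope R_scope.

Definition spectral_resolution2 (G : zmodType) (le : G -> G -> Prop) (k : nat)
    (F : R -> R -> Z * G) : Prop :=
  (forall s t, inM le k (F s t)) /\
  (forall s t s' t', s <= s' -> t <= t' -> lex_le le (F s t) (F s' t')) /\
  is_supM le k (fun y => exists s t, y = F s t) (lex_unit G k) /\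
  (forall s t, is_supM le k
     (fun y => exists s' t', s' < s /\ t' < t /\ y = F s' t') (F s t)) /\
  (forall t, is_infM le k (fun y => exists s, y = F s t) (lex_zero G)) /\
  (forall s, is_infM le k (fun y => exists t, y = F s t) (lex_zero G)) /\
  (forall a1 b1 a2 b2, a1 <= b1 -> a2 <= b2 ->
     let d := lex_add (lex_sub (lex_sub (F b1 b2) (F a1 b2)) (F b1 a2)) (F a1 a2) in
     lex_le le (lex_zero G) d /\ lex_le le d (lex_unit G k)).

(* T_j = {(s,t) : F(s,t) \in M_j}, M_j = {(j,g) \in M} *)
Definition T_set (G : zmodType) (F : R -> R -> Z * G) (j : Z) (s t : R) : Prop :=
  (F s t).1 = j.

Definition is_inf_R (A : R -> Prop) (x : R) : Prop :=
  (forall y, A y -> x <= y) /\ (forall z, (forall y, A y -> z <= y) -> z <= x).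

Definition char_point (G : zmodType) (F : R -> R -> Z * G) (i : Z) (p : R * R) : Prop :=
  exists s t, T_set F i s t /\
    is_inf_R (fun r => T_set F i r t) p.1 /\
    is_inf_R (fun r => T_set F i s r) p.2.

Definition char_point_F (G : zmodType) (F : R -> R -> Z * G) (p : R * R) : Prop :=
  exists i : Z, (1 <= i)%Z /\ char_point F i p.

Definition at_most (n : nat) (A : R * R -> Prop) : Prop :=
  exists l : list (R * R), (length l <= n)%coq_nat /\ forall p, A p -> List.In p l.

(* Only the integer part f(s,t) = (F s t).1 of the resolution matters. It is
   monotone, takes values in {0,...,k} and is supermodular on rectangles; it is
   moreover left-continuous on the levels >= 1, because in
   Gamma(Z x-> G, (k,0)) a supremum lying at a positive level is attained at
   that level.  A characteristic point p of T_i comes with a witness (s,t) such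
   that f(.,t) is < i at p.1 and = i on (p.1, s], and f(s,.) is < i at p.2 and
   = i on (p.2, t].  Supermodularity then forces distinct characteristic
   points of T_i to have distinct first coordinates, and makes r |-> f(r,T)
   strictly increasing along these first coordinates once T dominates the
   witnesses.  These values lie in {0,...,k-1}, so T_i has at most k
   characteristic points, and the k non-empty levels give at most k^2. *)
From mathcomp Require Import all_boot all_algebra.
From mathcomp Require Import zify.
From Stdlib Require Import Reals ZArith List Lia Lra Classical.

Import GRing.Theory.
Local Open Scope R_scope.

Lemma at_most_of_NoDup (n : nat) (A : R * R -> Prop) :
  (forall l, NoDup l -> (forall p, In p l -> A p) -> (length l <= n)%coq_nat) ->
  at_most n A.
Proof.
move=> bound; apply: NNPP => not_at_most.
suff /(_ n.+1 (le_n _)) [l [len_l [uniq_l l_in_A]]] :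
    forall m, (m <= n.+1)%coq_nat ->
    exists l, length l = m /\ NoDup l /\ forall p, In p l -> A p.
  by have := bound l uniq_l l_in_A; lia.
elim=> [|m IHm] m_le.
  by exists nil; split; [|split; [constructor|]].
have [l [len_l [uniq_l l_in_A]]] := IHm ltac:(lia).
have [[p [Ap p_new]] | l_covers] := classic (exists p, A p /\ ~ In p l).
  exists (p :: l); split; [by rewrite /= len_l | split; first by constructor].
  by move=> q /= [<- | q_l]; [|apply: l_in_A].
case: not_at_most; exists l; split; first lia.
move=> p Ap; apply: NNPP => p_new; apply: l_covers; by exists p.
Qed.

Lemma at_most_bigcup (n m : nat) (A : Z -> R * R -> Prop) :
  (forall i, (1 <= i <= Z.of_nat n)%Z -> at_most m (A i)) ->
  at_most (n * m) (fun p => exists i, (1 <= i <= Z.of_nat n)%Z /\ A i p).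
Proof.
elim: n => [|n IHn] A_bound.
  by exists nil; split => // p [i [i_range _]]; lia.
have [l [len_l l_cover]] :
    at_most (n * m) (fun p => exists i, (1 <= i <= Z.of_nat n)%Z /\ A i p).
  by apply: IHn => i i_range; apply: A_bound; lia.
have [l' [len_l' l'_cover]] := A_bound (Z.of_nat n.+1) ltac:(lia).
exists (l ++ l'); split.
  by rewrite length_app mulSn; lia.
move=> p [i [i_range Aip]]; apply: in_or_app.
have [i_eq | i_ne] := Z.eq_dec i (Z.of_nat n.+1).
  by right; apply: l'_cover; rewrite -i_eq.
by left; apply: l_cover; exists i; split; first lia.
Qed.

Lemma list_common_bound (A : Type) (P : A -> R -> Prop) (l : list A) :
  (forall x, In x l -> exists t, P x t) ->
  exists T, forall x, In x l -> exists2 t, P x t & t <= T.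
Proof.
elim: l => [|a l IHl] hP; first by exists 0 => x [].
have [T hT] := IHl (fun x x_l => hP x (or_intror x_l)).
have [t Pat] := hP a (or_introl erefl).
exists (Rmax T t) => x /= [<- | x_l]; first by exists t => //; apply: Rmax_r.
have [t' Pxt' t'_le] := hT x x_l.
by exists t' => //; apply: Rle_trans t'_le (Rmax_l _ _).
Qed.

Definition run_start (g : R -> Z) (i : Z) (a s : R) : Prop :=
  [/\ a < s, forall r, a < r <= s -> g r = i & (g a < i)%Z].

Lemma is_inf_level_run_start (g : R -> Z) (i : Z) (a s : R) :
  (forall x y, x <= y -> (g x <= g y)%Z) ->
  (forall r, g r = i -> exists2 r', r' < r & g r' = i) ->
  g s = i -> is_inf_R (fun r => g r = i) a -> run_start g i a s.
Proof.
move=> g_mono no_min gs [a_lb a_glb].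
have a_le_s : a <= s by apply: a_lb.
have ga_lt : (g a < i)%Z.
  have := g_mono _ _ a_le_s; rewrite gs => ga_le.
  have [ga_eq | ] := Z.eq_dec (g a) i; last lia.
  have [r' r'_lt gr'] := no_min _ ga_eq.
  by have := a_lb _ gr'; lra.
split=> //.
  by case: (Rle_lt_or_eq_dec _ _ a_le_s) => // a_eq; subst a; lia.
move=> r [a_lt_r r_le_s].
have [[y [gy y_lt_r]] | no_y] := classic (exists y, g y = i /\ y < r).
  by have := g_mono _ _ (Rlt_le _ _ y_lt_r); have := g_mono _ _ r_le_s; lia.
suff : r <= a by lra.
apply: a_glb => y gy; apply: Rnot_lt_le => y_lt_r; apply: no_y; by exists y.
Qed.

Definition level_char_point (f : R -> R -> Z) (i : Z) (p : R * R) : Prop :=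
  exists s t, f s t = i /\
    is_inf_R (fun r => f r t = i) p.1 /\ is_inf_R (fun r => f s r = i) p.2.

Record level_map (k : nat) (f : R -> R -> Z) : Prop := LevelMap {
  level_ge0 : forall s t, (0 <= f s t)%Z;
  level_lek : forall s t, (f s t <= Z.of_nat k)%Z;
  level_mono : forall s t s' t', s <= s' -> t <= t' -> (f s t <= f s' t')%Z;
  level_rect : forall a1 b1 a2 b2, a1 <= b1 -> a2 <= b2 ->
    (f a1 b2 + f b1 a2 <= f b1 b2 + f a1 a2)%Z;
  level_left_cont : forall s t, (1 <= f s t)%Z ->
    exists s' t', [/\ s' < s, t' < t & f s' t' = f s t] }.

Arguments level_ge0 {k f}.
Arguments level_lek {k f}.
Arguments level_mono {k f}.
Arguments level_rect {k f}.
Arguments level_left_cont {k f}.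

Section LevelMap.
Context {k : nat} {f : R -> R -> Z}.
Hypothesis hf : level_map k f.

Lemma level_left_cont_axes s t : (1 <= f s t)%Z ->
  (exists2 s', s' < s & f s' t = f s t) /\ (exists2 t', t' < t & f s t' = f s t).
Proof.
move=> /(level_left_cont hf) [s' [t' [s'_lt t'_lt eq_st]]].
have := level_mono hf s' t' s' t (Rle_refl _) (Rlt_le _ _ t'_lt).
have := level_mono hf s' t s t (Rlt_le _ _ s'_lt) (Rle_refl _).
have := level_mono hf s' t' s t' (Rlt_le _ _ s'_lt) (Rle_refl _).
have := level_mono hf s t' s t (Rle_refl _) (Rlt_le _ _ t'_lt).
by move=> *; split; [exists s' | exists t'] => //; lia.
Qed.

Definition char_witness (i : Z) (p : R * R) (s t : R) : Prop :=
  run_start (f^~ t) i p.1 s /\ run_start (f s) i p.2 t.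

Lemma level_char_point_witness {i p} : (1 <= i)%Z ->
  level_char_point f i p -> exists s t, char_witness i p s t.
Proof.
move=> i_ge1 [s [t [fst_i [inf1 inf2]]]]; exists s, t.
split; apply: is_inf_level_run_start => //.
- by move=> x y xy; apply: (level_mono hf) => //; apply: Rle_refl.
- by move=> r fr; have [+ _] := level_left_cont_axes r t ltac:(lia); rewrite fr.
- by move=> x y xy; apply: (level_mono hf) => //; apply: Rle_refl.
- by move=> r fr; have [_ +] := level_left_cont_axes s r ltac:(lia); rewrite fr.
Qed.

Lemma level_char_point_le {i p} : level_char_point f i p -> (i <= Z.of_nat k)%Z.
Proof. by move=> [s [t [<- _]]]; apply: (level_lek hf). Qed.

Lemma run_start_jump {i t a s T r} :
  run_start (f^~ t) i a s -> t <= T -> a < r -> (f a T < f r T)%Z.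
Proof.
move=> [a_lt_s row fa_lt] t_le_T a_lt_r.
have a_lt_r' : a < Rmin r s by apply: Rmin_glb_lt.
have := row _ (conj a_lt_r' (Rmin_r _ _)).
have := level_rect hf a (Rmin r s) t T (Rlt_le _ _ a_lt_r') t_le_T.
have := level_mono hf (Rmin r s) T r T (Rmin_l _ _) (Rle_refl _).
lia.
Qed.

Lemma char_witness_snd_le {i p q s t s' t'} :
  char_witness i p s t -> char_witness i q s' t' -> p.1 <= q.1 -> q.2 <= p.2.
Proof.
move=> [[p1_lt row_p _] [p2_lt col_p _]] [[q1_lt _ _] [_ _ f_q2_lt]] p1_le.
apply: Rnot_lt_le => p2_lt_q2.
have p1_lt_r : p.1 < Rmin s s' by apply: Rmin_glb_lt; lra.
have p2_lt_r' : p.2 < Rmin t q.2 by apply: Rmin_glb_lt.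
have := row_p s (conj p1_lt (Rle_refl _)).
have := row_p _ (conj p1_lt_r (Rmin_l _ _)).
have := col_p _ (conj p2_lt_r' (Rmin_l _ _)).
have := level_rect hf (Rmin s s') s (Rmin t q.2) t (Rmin_l _ _) (Rmin_l _ _).
have := level_mono hf (Rmin s s') (Rmin t q.2) s' q.2 (Rmin_r _ _) (Rmin_r _ _).
rewrite /= in f_q2_lt; lia.
Qed.

Lemma char_witness_fst_inj {i p q s t s' t'} :
  char_witness i p s t -> char_witness i q s' t' -> p.1 = q.1 -> p = q.
Proof.
move=> wp wq eq1.
apply: injective_projections => //; apply: Rle_antisym.
- exact: char_witness_snd_le wq wp (Req_le _ _ (esym eq1)).
- exact: char_witness_snd_le wp wq (Req_le _ _ eq1).
Qed.

Lemma NoDup_level_char_points i l : (1 <= i)%Z -> NoDup l ->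
  (forall p, In p l -> level_char_point f i p) -> (length l <= k)%coq_nat.
Proof.
move=> i_ge1 uniq_l l_cp.
have [T hT] : exists T, forall p, In p l ->
    exists2 t, (exists s, char_witness i p s t) & t <= T.
  apply: list_common_bound => p /l_cp /(level_char_point_witness i_ge1).
  by move=> [s [t w]]; exists t, s.
pose phi (p : R * R) := f p.1 T.
have uniq_phi : NoDup (List.map phi l).
  apply: NoDup_map_NoDup_ForallPairs uniq_l.
  move=> p q /hT [t [s wp] t_le] /hT [t' [s' wq] t'_le]; rewrite /phi => phi_eq.
  case: (total_order_T p.1 q.1) => [[lt | eq1] | gt].
  - by have := run_start_jump (proj1 wp) t_le lt; lia.
  - exact: char_witness_fst_inj wp wq eq1.
  - by have := run_start_jump (proj1 wq) t'_le gt; lia.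
have phi_range : incl (List.map phi l) (List.map Z.of_nat (List.seq 0 k)).
  move=> z /in_map_iff [p [<- /hT [t [s wp] t_le]]].
  have := run_start_jump (proj1 wp) t_le (Rlt_plus_1 p.1).
  have := level_lek hf (p.1 + 1) T; have := level_ge0 hf p.1 T.
  move=> *; apply/in_map_iff; exists (Z.to_nat (phi p)).
  by rewrite in_seq /phi; split; lia.
by have := NoDup_incl_length uniq_phi phi_range; rewrite !length_map length_seq.
Qed.

Lemma level_char_points_at_most i : (1 <= i)%Z -> at_most k (level_char_point f i).
Proof. by move=> i_ge1; apply: at_most_of_NoDup => l; apply: NoDup_level_char_points. Qed.

End LevelMap.

Section LexicographicInterval.
Context {G : zmodType} {le : G -> G -> Prop}.
Hypothesis lg : is_lgroup le.
Local Open Scope ring_scope.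

Lemma lgroup_pos_or_trivial :
  (exists2 e, le 0 e & e <> 0) \/ (forall g h : G, g = h).
Proof.
case: lg => _ _ _ le_add join.
have [pos | no_pos] := classic (exists2 e, le 0 e & e <> 0); [by left | right].
have below_eq g j : le g j -> g = j.
  move=> /(le_add _ _ (- g)); rewrite subrr => jg_pos.
  apply/esym/subr0_eq; apply: NNPP => jg_nz; apply: no_pos; by exists (j - g).
move=> g h; have [j [j_ub _]] := join g h.
rewrite (below_eq g j (j_ub g (or_introl erefl))).
by rewrite (below_eq h j (j_ub h (or_intror erefl))).
Qed.

(* Witness: lower the G-part of x by some e > 0, or drop one level if G = 0. *)
Lemma inM_lower_levels_bound {k : nat} {x : Z * G} : inM le k x -> (1 <= x.1)%Z ->
  exists z, [/\ inM le k z, forall y, (y.1 < x.1)%Z -> lex_le le y z & ~ lex_le le x z].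
Proof.
have [le_refl le_anti le_trans le_add _] := lg.
move=> [_ x_le_top] x1_ge1; rewrite /inM /lex_le /= in x_le_top *.
case: lgroup_pos_or_trivial => [[e e_pos e_nz] | triv].
  have x2e_le : le (x.2 - e) x.2.
    by have := le_add _ _ (x.2 - e) e_pos; rewrite add0r (addrC e) subrK.
  exists (x.1, (x.2 - e)); split=> /=; first split=> /=.
  - by left; lia.
  - case: x_le_top => [lt | [eq le_x2]]; [by left | right; split=> //].
    exact: le_trans x2e_le le_x2.
  - by move=> y lt; left.
  - case=> [|[_ le_x2]]; first lia.
    apply: e_nz; apply: oppr_inj; apply: (addrI x.2).
    by rewrite oppr0 addr0 -(le_anti _ _ le_x2 x2e_le).
exists ((x.1 - 1)%Z, x.2); split=> /=; first split=> /=.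
- have [x1_eq | ] := Z.eq_dec x.1 1; last by left; lia.
  by right; split; [lia | rewrite (triv x.2 0); apply: le_refl].
- by left; case: x_le_top => [|[]]; lia.
- move=> y lt; have [eq | ne] := Z.eq_dec y.1 (x.1 - 1); last by left; lia.
  by right; split=> //; rewrite (triv y.2 x.2); apply: le_refl.
- by case=> [|[]]; lia.
Qed.

Lemma is_supM_level_attained {k : nat} {A : Z * G -> Prop} {x : Z * G} :
  is_supM le k A x -> (1 <= x.1)%Z -> exists2 y, A y & y.1 = x.1.
Proof.
move=> [xM [x_ub x_lub]] x1_ge1; apply: NNPP => not_attained.
have [z [zM z_ub x_not_le_z]] := inM_lower_levels_bound xM x1_ge1.
apply: x_not_le_z; apply: (x_lub _ zM) => y Ay; apply: z_ub.
case: (x_ub y Ay) => [// | [eq _]]; exfalso; apply: not_attained; by exists y.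
Qed.

Lemma spectral_resolution2_level_map {k : nat} {F : R -> R -> Z * G} :
  spectral_resolution2 le k F -> level_map k (fun s t => (F s t).1).
Proof.
move=> [F_in [F_mono [_ [F_lc [_ [_ F_rect]]]]]]; split.
- by move=> s t; case: (proj1 (F_in s t)) => [|[]] /=; lia.
- by move=> s t; case: (proj2 (F_in s t)) => [|[]] /=; lia.
- by move=> s t s' t' ss' tt'; case: (F_mono s t s' t' ss' tt') => [|[]]; lia.
- move=> a1 b1 a2 b2 ab1 ab2.
  by case: (proj1 (F_rect a1 b1 a2 b2 ab1 ab2)) => [|[]] /=; lia.
- move=> s t lvl_ge1.
  have [y [s' [t' [s'_lt [t'_lt ->]]]] lvl_eq] :=
    is_supM_level_attained (F_lc s t) lvl_ge1.
  by exists s', t'.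
Qed.

End LexicographicInterval.

Theorem theorem4p4 (k : nat) (G : zmodType) (le : G -> G -> Prop)
    (F : R -> R -> Z * G) :
  (1 <= k)%coq_nat ->
  is_lgroup le -> dedekind_sigma_complete le ->
  spectral_resolution2 le k F ->
  (forall i : Z, (1 <= i <= Z.of_nat k)%Z ->
     (exists s t, T_set F i s t) -> at_most k (char_point F i)) /\
  at_most (k * k) (char_point_F F).
Proof.
move=> _ lg _ sr.
have lvl := spectral_resolution2_level_map lg sr.
have cp_at_most i : (1 <= i)%Z -> at_most k (char_point F i).
  exact: level_char_points_at_most lvl i.
split; first by move=> i [i_ge1 _] _; apply: cp_at_most.
have [l [len_l l_cover]] := at_most_bigcup k k (char_point F)
  (fun i i_range => cp_at_most i (proj1 i_range)).
exists l; split=> // p [i [i_ge1 cp]]; apply: l_cover; exists i; do 2?split=> //.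
exact (level_char_point_le lvl cp).
Qed.
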